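(* Let $G$ be a graph whose adjacency spectrum contains exactly two eigenvalues (counted with multiplicity) different from $2$ and $-1$, namely $r>2$ and $s<-1$. Then: (i) one connected component of $G$ has all its vertices of degree at least $3$, and all other connected components are isomorphic to $K_3$; (ii) if $u,v$ are distinct non-adjacent vertices such that every neighbor of $u$ is also a neighbor of $v$, then $d_v-d_u\geq 5$.
   Context: Graphs are finite and simple; eigenvalues are those of the adjacency matrix; $d_v$ denotes the degree of vertex $v$. *)

From mathcomp Require Import all_boot all_order all_algebra.
Set Implicit Arguments. Unset Strict Implicit. Unset Printing Implicit Defensive.
Import Order.TTheory GRing.Theory Num.Theory.
Local Open Scope ring_scope.

(* A finite simple graph on the vertex set 'I_n is a symmetric irreflexive
   relation e : rel 'I_n (these properties are hypotheses of the theorem). *)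

Definition adjmx (R : nzRingType) (n : nat) (e : rel 'I_n) : 'M[R]_n :=
  \matrix_(i < n, j < n) (e i j)%:R.

Definition deg (n : nat) (e : rel 'I_n) (v : 'I_n) : nat := #|[set w | e v w]|.

Definition component (n : nat) (e : rel 'I_n) (v : 'I_n) : {set 'I_n} :=
  [set w | connect e v w].

(* A set of vertices induces a K_3 (used for components, which are induced). *)
Definition is_K3 (n : nat) (e : rel 'I_n) (C : {set 'I_n}) : Prop :=
  #|C| = 3%N /\ (forall x y, x \in C -> y \in C -> x != y -> e x y).

(* Write A for the adjacency matrix.  As r and s are simple eigenvalues and
   the remaining ones are 2 and -1, A is annihilated by
   (X - 2)(X + 1)(X - r)(X - s), so it is a combination of the orthogonal
   projections E_z onto its eigenspaces and
     M = (A - 2)(A + 1) = (r - 2)(r + 1) E_r + (s - 2)(s + 1) E_s,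
     2 - A = 3 E_(-1) + (2 - r) E_r + (2 - s) E_s.
   Hence M is positive semidefinite, and 2 - A is positive semidefinite on the
   kernel of E_r.  Since M_vv = d_v - 2, every degree is at least 2, and a vertex
   of degree 2 has a null row in M, which forces its component to be a
   triangle.  A vertex of degree at least 3 exists, as otherwise M = 0.  If two
   components had all degrees at least 3, some nonzero combination z of their
   indicator vectors would satisfy z E_r = 0 (r is simple), while
   z (2 - A) z^T = sum_v (2 - d_v) z_v^2 < 0.  For (ii), the form of M at
   e_v - e_u equals d_v - d_u - 4, and it cannot vanish since the u-entry of
   (e_v - e_u) M is 2. *)

From mathcomp Require Import all_boot all_order all_algebra.
From mathcomp Require Import ring lra.
Set Implicit Arguments. Unset Strict Implicit. Unset Printing Implicit Defensive.
Import Order.TTheory GRing.Theory Num.Theory.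

Section GraphComponents.

Variables (n : nat) (e : rel 'I_n).
Hypotheses (e_sym : symmetric e) (e_irr : irreflexive e).

Definition codeg u v := #|[set w | e u w & e w v]|.

Lemma codegii v : codeg v v = deg e v.
Proof. by apply: eq_card => w; rewrite !inE (e_sym w v) andbb. Qed.

Lemma codegC u v : codeg u v = codeg v u.
Proof. by apply: eq_card => w; rewrite !inE andbC e_sym (e_sym w). Qed.

Lemma codeg_nbr_sub u v : (forall w, e u w -> e v w) -> codeg u v = deg e u.
Proof.
move=> Nuv; apply: eq_card => w; rewrite !inE.
by case: (boolP (e u w)) => // uw; rewrite e_sym Nuv.
Qed.

Lemma mem_component_edge c x y :
  e x y -> (x \in component e c) = (y \in component e c).
Proof.
by move=> xy; rewrite !inE; apply: (connect_closed (sym_connect_sym e_sym)).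
Qed.

Lemma mem_component_sym c d : (c \in component e d) = (d \in component e c).
Proof. by rewrite !inE (sym_connect_sym e_sym). Qed.

Lemma mem_component c : c \in component e c.
Proof. by rewrite inE connect0. Qed.

Lemma component_sub (S : {set 'I_n}) w :
  (forall x y, x \in S -> e x y -> y \in S) -> w \in S -> component e w \subset S.
Proof.
move=> S_closed w_S.
have S_cl : closed e S.
  by apply: (intro_closed (sym_connect_sym e_sym)) => x y /[swap]; apply: S_closed.
by apply/subsetP => x; rewrite inE => /(closed_connect S_cl) <-.
Qed.

Lemma K3_component_deg w x :
  is_K3 e (component e w) -> x \in component e w -> deg e x = 2.
Proof.
move=> [C3 C_K3] C_x; rewrite /deg.
have -> : [set y | e x y] = component e w :\ x.
  apply/setP => y; rewrite in_setD1 [LHS]inE.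
  apply/idP/idP => [xy | /andP [yx C_y]].
    rewrite -(mem_component_edge w xy) C_x andbT.
    by apply: contraTneq xy => ->; rewrite e_irr.
  by apply: C_K3; rewrite // eq_sym.
by have := cardsD1 x (component e w); rewrite C_x C3 => -[].
Qed.

Lemma codeg_row_component_K3 w :
  deg e w = 2 -> (forall x, x != w -> codeg w x = e w x) ->
  is_K3 e (component e w).
Proof.
move=> degw codeg_w; set N := [set y | e w y].
have N2 : #|N| = 2 by [].
have N_nbr x y : x \in N -> e x y -> y != w -> y \in N.
  move=> N_x xy yw; rewrite inE -[e w y]lt0b -(codeg_w y yw).
  by apply/card_gt0P; exists x; rewrite !inE xy andbT; rewrite inE in N_x.
have compN : component e w = w |: N.
  apply/eqP; rewrite eqEsubset; apply/andP; split.
    apply: component_sub => [x y | ]; last by rewrite setU11.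
    rewrite !in_setU1 => /predU1P [-> wy | N_x xy]; first by rewrite inE wy orbT.
    by case: eqVneq => //= yw; apply: N_nbr xy yw.
  apply/subsetP => x; rewrite !inE => /predU1P [-> | wx]; first exact: connect0.
  exact: connect1.
have wN : w \notin N by rewrite inE e_irr.
rewrite compN; split; first by rewrite cardsU1 wN N2.
move=> x y; rewrite !inE => /predU1P [-> | wx] /predU1P [-> | wy] xy //.
- by rewrite eqxx in xy.
- by rewrite e_sym.
have xw : x != w by apply: contraTneq wx => ->; rewrite e_irr.
have /card_gt0P [k] : (0 < codeg w x)%N by rewrite codeg_w // wx.
rewrite !inE => /andP [wk kx].
have Nx1 : #|N :\ x| = 1.
  by have := cardsD1 x N; rewrite N2 inE wx => -[].
have /cards1P [z Nx] : #|N :\ x| == 1 by rewrite Nx1.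
have : k \in N :\ x.
  by rewrite !inE wk andbT; apply: contraTneq kx => ->; rewrite e_irr.
have : y \in N :\ x by rewrite !inE wy andbT eq_sym.
by rewrite Nx !inE => /eqP -> /eqP <-; rewrite e_sym.
Qed.

End GraphComponents.

Local Open Scope ring_scope.

Section QuadraticForm.

Variables (R : realFieldType) (m : nat).
Implicit Types (x y : 'rV[R]_m) (N : 'M[R]_m).

Definition sqnorm y : R := \sum_j y 0 j ^+ 2.

Definition qform x N : R := (x *m N *m x^T) 0 0.

Lemma sqnorm_ge0 y : 0 <= sqnorm y.
Proof. by apply: sumr_ge0 => j _; rewrite sqr_ge0. Qed.

Lemma sqnorm_eq0 y : (sqnorm y == 0) = (y == 0).
Proof.
rewrite psumr_eq0 => [|j _]; last exact: sqr_ge0.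
apply/allP/eqP => [y0 | -> j _]; last by rewrite mxE expr0n eqxx.
by apply/rowP => j; apply/eqP; rewrite mxE -sqrf_eq0; apply: y0 (mem_index_enum j).
Qed.

Lemma sqnorm0 : sqnorm 0 = 0.
Proof. by apply/eqP; rewrite sqnorm_eq0. Qed.

Lemma qform_delta N i : qform (delta_mx 0 i) N = N i i.
Proof. by rewrite /qform trmx_delta -rowE -colE !mxE. Qed.

Lemma qform_delta_sub N u v :
  qform (delta_mx 0 v - delta_mx 0 u) N = N v v - N u v - N v u + N u u.
Proof.
by rewrite /qform linearB /= !trmx_delta mulmxBl !mulmxBr -!rowE -!colE !mxE
  opprD opprK addrA.
Qed.

Lemma qform_sum I (s : seq I) (c : I -> R) (N_ : I -> 'M[R]_m) x :
  qform x (\sum_(i <- s) c i *: N_ i) = \sum_(i <- s) c i * qform x (N_ i).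
Proof.
rewrite /qform mulmx_sumr mulmx_suml summxE; apply: eq_bigr => i _.
by rewrite -scalemxAr -scalemxAl mxE.
Qed.

Lemma qform_sqr x N : N^T = N -> qform x (N *m N) = sqnorm (x *m N).
Proof.
move=> N_sym; rewrite /qform -{2}N_sym !mulmxA -mulmxA -trmx_mul mxE /sqnorm.
by apply: eq_bigr => j _; rewrite expr2 !mxE.
Qed.

Lemma sym_mx_sqr_eq0 N : N^T = N -> N *m N = 0 -> N = 0.
Proof.
move=> N_sym NN0; apply/row_matrixP => i; rewrite row0 rowE; apply/eqP.
by rewrite -sqnorm_eq0 -qform_sqr // NN0 qform_delta mxE.
Qed.

End QuadraticForm.

Section SymmetricHorner.

Variables (R : realFieldType) (m : nat) (A : 'M[R]_m.+1).
Hypothesis A_sym : A^T = A.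

Lemma horner_mx_tr p : (horner_mx A p)^T = horner_mx A p.
Proof.
elim/poly_ind: p => [|p c IHp]; first by rewrite rmorph0 trmx0.
rewrite rmorphD rmorphM /= horner_mx_X horner_mx_C linearD /= tr_scalar_mx.
rewrite -mulmxE trmx_mul IHp A_sym.
by rewrite (comm_mx_horner p (erefl : comm_mx A A)).
Qed.

Lemma horner_mx_sqrfree q h k :
  horner_mx A (q ^+ k * h) = 0 -> horner_mx A (q * h) = 0.
Proof.
elim: k => [|k IHk]; first by rewrite mul1r rmorphM /= => ->; rewrite mulr0.
case: k IHk => [|k] IHk; first by rewrite expr1.
move=> qh0; apply: IHk; apply: sym_mx_sqr_eq0; first exact: horner_mx_tr.
rewrite mulmxE -rmorphM /=.
have -> : q ^+ k.+1 * h * (q ^+ k.+1 * h) = q ^+ k.+2 * h * (q ^+ k * h).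
  by rewrite !exprS; ring.
by rewrite rmorphM /= qh0 mul0r.
Qed.

End SymmetricHorner.

Section SpectralDecomposition.

Variables (R : realFieldType) (m : nat) (A : 'M[R]_m.+1) (rs : seq R).
Hypotheses (A_sym : A^T = A) (rs_uniq : uniq rs).
Hypothesis A_ann : horner_mx A (\prod_(z <- rs) ('X - z%:P)) = 0.

Lemma horner_mx_eq_on f g :
  {in rs, forall z, f.[z] = g.[z]} -> horner_mx A f = horner_mx A g.
Proof.
move=> fg; apply/eqP; rewrite -subr_eq0 -rmorphB /=.
have /dvdpP [q ->] : \prod_(z <- rs) ('X - z%:P) %| f - g.
  apply: uniq_roots_dvdp; last by rewrite uniq_rootsE.
  by apply/allP => z rs_z; rewrite rootE !hornerE fg ?subrr.
by rewrite rmorphM /= A_ann mulr0.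
Qed.

Definition lagrange z : {poly R} :=
  \prod_(w <- rs | w != z) ((z - w)^-1 *: ('X - w%:P)).

Lemma lagrangeE z w : w \in rs -> (lagrange z).[w] = (w == z)%:R.
Proof.
move=> rs_w; rewrite /lagrange horner_prod; have [-> | wz] := eqVneq w z.
  by rewrite big1 // => u uz; rewrite hornerZ hornerXsubC mulVf // subr_eq0 eq_sym.
apply/eqP; rewrite prodf_seq_eq0; apply/hasP; exists w => //.
by rewrite wz hornerZ hornerXsubC subrr mulr0 eqxx.
Qed.

Definition eigenproj z := horner_mx A (lagrange z).

Lemma horner_mx_spectral f :
  horner_mx A f = \sum_(z <- rs) f.[z] *: eigenproj z.
Proof.
have -> : \sum_(z <- rs) f.[z] *: eigenproj z =
          horner_mx A (\sum_(z <- rs) f.[z] *: lagrange z).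
  by rewrite linear_sum; apply: eq_bigr => z _; rewrite linearZ.
apply: horner_mx_eq_on => w rs_w; rewrite horner_sum (bigD1_seq w) //= big1.
  by rewrite hornerZ lagrangeE // eqxx mulr1 addr0.
by move=> z zw; rewrite hornerZ lagrangeE // eq_sym (negPf zw) mulr0.
Qed.

Lemma eigenproj_mulmx z : eigenproj z *m A = z *: eigenproj z.
Proof.
rewrite /eigenproj mulmxE -{2}(horner_mx_X A) -rmorphM -linearZ /=.
apply: horner_mx_eq_on => w rs_w; rewrite hornerM hornerX hornerZ lagrangeE //.
by have [-> | _] := eqVneq w z; rewrite ?mulr1 ?mul1r ?mulr0 ?mul0r.
Qed.

Lemma eigenproj_idem z : eigenproj z *m eigenproj z = eigenproj z.
Proof.
rewrite mulmxE -rmorphM; apply: horner_mx_eq_on => w rs_w.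
by rewrite hornerM lagrangeE //; case: (w == z); rewrite ?mulr1 ?mulr0.
Qed.

Lemma qform_horner_mx x f :
  qform x (horner_mx A f) = \sum_(z <- rs) f.[z] * sqnorm (x *m eigenproj z).
Proof.
rewrite horner_mx_spectral qform_sum; apply: eq_bigr => z _.
by rewrite -qform_sqr ?eigenproj_idem //; apply: horner_mx_tr.
Qed.

Lemma qform_horner_mx_ge0 x f :
    {in rs, forall z, 0 <= f.[z] \/ x *m eigenproj z = 0} ->
  0 <= qform x (horner_mx A f).
Proof.
move=> f_ge0; rewrite qform_horner_mx big_seq.
apply: sumr_ge0 => z /f_ge0 [f_z | ->].
  by rewrite mulr_ge0 ?sqnorm_ge0.
by rewrite sqnorm0 mulr0.
Qed.

Lemma qform_horner_mx_eq0 x f :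
    {in rs, forall z, 0 <= f.[z]} -> qform x (horner_mx A f) = 0 ->
  x *m horner_mx A f = 0.
Proof.
move=> f_ge0 /eqP; rewrite qform_horner_mx big_seq psumr_eq0; last first.
  by move=> z /f_ge0 f_z; rewrite mulr_ge0 ?sqnorm_ge0.
move=> /allP terms0; rewrite horner_mx_spectral mulmx_sumr big_seq big1 //.
move=> z rs_z; move: (terms0 z rs_z); rewrite rs_z mulf_eq0 sqnorm_eq0.
case/orP => [/eqP -> | /eqP xE0]; first by rewrite scale0r mulmx0.
by rewrite -scalemxAr xE0 scaler0.
Qed.

End SpectralDecomposition.

Lemma eigen_rows_dvd_char_poly (F : fieldType) n k (A : 'M[F]_n)
    (W : 'M[F]_(k, n)) a :
  row_free W -> W *m A = a *: W -> ('X - a%:P) ^+ k %| char_poly A.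
Proof.
move=> /eqP rankW WA.
have le_kn : (k <= n)%N by rewrite -rankW rank_leq_col.
set U := row_ebase W.
have UA (i j : 'I_n) : (i < k)%N -> (U *m A) i j = a * U i j.
  move=> lt_ik.
  have pidU : pid_mx k *m U = invmx (col_ebase W) *m W.
    by rewrite -{2}(mulmx_ebase W) rankW -!mulmxA mulKmx // col_ebase_unit.
  have rowU : row i U = row (Ordinal lt_ik) (pid_mx k *m U).
    rewrite (pid_mxErow _ le_kn) mul_rowsub_mx mul1mx row_rowsub.
    by congr row; apply: val_inj.
  have rowUA : row i U *m A = a *: row i U.
    rewrite rowU -row_mul pidU -mulmxA WA -scalemxAr.
    by apply/rowP => l; rewrite !mxE.
  by have := congr1 (fun v : 'rV_n => v 0 j) rowUA; rewrite /= -row_mul !mxE.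
pose P := map_mx polyC U.
pose d := \row_(i < n) (if (i < k)%N then 'X - a%:P else 1 : {poly F}).
pose Q := \matrix_(i, j) (if (i < k)%N then P i j else (P *m char_poly_mx A) i j).
have PQ : P *m char_poly_mx A = diag_mx d *m Q.
  rewrite mul_diag_mx; apply/matrixP => i j; rewrite [RHS]mxE [d 0 i]mxE [Q i j]mxE.
  case: ifP => lt_ik; last by rewrite mul1r.
  have := UA i j lt_ik; rewrite /char_poly_mx mulmxBr mul_mx_scalar -map_mxM.
  by rewrite !mxE => ->; rewrite rmorphM /=; ring.
have detd : \det (diag_mx d) = ('X - a%:P) ^+ k.
  rewrite det_diag (eq_bigr _ (fun i _ => mxE _ _ _ _)) -big_mkcond /=.
  by rewrite (big_ord_narrow (F := fun=> 'X - a%:P) le_kn) /= prodr_const card_ord.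
have detU : \det U != 0 by rewrite -unitfE -unitmxE row_ebase_unit.
rewrite -(dvdpZr _ _ detU) -mul_polyC -det_map_mx -det_mulmx PQ det_mulmx detd.
exact: dvdp_mulr.
Qed.

Lemma XsubC_sqr_ndvd (F : idomainType) (a : F) h :
  ~~ root h a -> ~~ (('X - a%:P) ^+ 2 %| ('X - a%:P) * h).
Proof. by rewrite expr2 dvdp_mul2l ?polyXsubC_eq0 // dvdp_XsubCl. Qed.

Lemma horner_mx_eigen (R : comNzRingType) m (A : 'M[R]_m.+1) (v : 'rV_m.+1) a p :
  v *m A = a *: v -> v *m horner_mx A p = p.[a] *: v.
Proof.
move=> vA; elim/poly_ind: p => [|p c IHp].
  by rewrite rmorph0 mulmx0 horner0 scale0r.
rewrite rmorphD rmorphM /= horner_mx_X horner_mx_C -mulmxE mulmxDr mulmxA IHp.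
by rewrite -scalemxAl vA mul_mx_scalar !hornerE scalerA -scalerDl.
Qed.

Section AdjacencyMatrix.

Variables (R : nzRingType) (n : nat) (e : rel 'I_n).

Lemma adjmx_tr : symmetric e -> (adjmx R e)^T = adjmx R e.
Proof. by move=> e_sym; apply/matrixP => i j; rewrite !mxE e_sym. Qed.

Lemma adjmx_sqrE i j : (adjmx R e *m adjmx R e) i j = (codeg e i j)%:R.
Proof.
rewrite mxE /codeg -sum1_card natr_sum [RHS]big_mkcond /=; apply: eq_bigr => k _.
by rewrite !mxE inE -natrM mulnb; case: (_ && _).
Qed.

Lemma mulmx_adjmx_edge_const (z : 'rV[R]_n) i :
  symmetric e -> (forall x y, e x y -> z 0 x = z 0 y) ->
  (z *m adjmx R e) 0 i = z 0 i *+ deg e i.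
Proof.
move=> e_sym z_const; rewrite mxE /deg -sum1_card -sumrMnr [RHS]big_mkcond /=.
apply: eq_bigr => j _; rewrite !mxE inE e_sym.
by case: (boolP (e i j)) => [ij | _]; rewrite ?mulr0 ?mulr0n // mulr1 (z_const i j).
Qed.

End AdjacencyMatrix.

Lemma uniq_exceptional (R : realFieldType) (r s : R) :
  2 < r -> s < -1 -> uniq [:: 2; -1; r; s].
Proof.
move=> r_gt2 s_ltN1; rewrite /= !inE !negb_or !andbT.
do !(apply/andP; split); rewrite neq_lt; apply/orP.
all: by first [left; lra | right; lra].
Qed.

Lemma quad_exceptional_ge0 (R : realFieldType) (r s : R) :
    2 < r -> s < -1 ->
  {in [:: 2; -1; r; s], forall z, 0 <= (('X - 2%:P) * ('X - (-1)%:P)).[z]}.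
Proof.
move=> r_gt2 s_ltN1 z; rewrite !inE => /or4P [] /eqP ->; rewrite !hornerE.
- by rewrite subrr mul0r.
- by rewrite subrr mulr0.
- by apply: mulr_ge0; lra.
- by apply: mulr_le0; lra.
Qed.

Section TwoExceptionalEigenvalues.

Variables (R : realFieldType) (n : nat) (e : rel 'I_n.+1) (r s : R).
Hypotheses (e_sym : symmetric e) (e_irr : irreflexive e).
Hypotheses (r_gt2 : 2 < r) (s_ltN1 : s < -1).

Local Notation A := (adjmx R e).
Local Notation rs := [:: 2; -1; r; s].
Hypothesis A_ann : horner_mx A (\prod_(z <- rs) ('X - z%:P)) = 0.

Let A_sym : A^T = A := adjmx_tr R e_sym.
Let rs_uniq : uniq rs := uniq_exceptional r_gt2 s_ltN1.

Local Notation M := (horner_mx A (('X - 2%:P) * ('X - (-1)%:P))).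

Lemma horner_adjmx_quadE i j :
  M i j = (codeg e i j)%:R - (e i j)%:R - 2 *+ (i == j).
Proof.
rewrite rmorphM !rmorphB /= horner_mx_X !horner_mx_C.
rewrite -mulmxE mulmxBl !mulmxBr mul_mx_scalar !mul_scalar_mx -adjmx_sqrE.
by rewrite !mxE; case: (i == j); rewrite ?mulr1n ?mulr0n; ring.
Qed.

Lemma horner_adjmx_quad_diag w : M w w = (deg e w)%:R - 2.
Proof. by rewrite horner_adjmx_quadE codegii // e_irr eqxx /= mulr1n subr0. Qed.

Lemma qform_quad_ge0 x : 0 <= qform x M.
Proof.
apply: (qform_horner_mx_ge0 A_sym rs_uniq A_ann).
by move=> z /(quad_exceptional_ge0 r_gt2 s_ltN1); left.
Qed.

Lemma qform_quad_eq0 x : qform x M = 0 -> x *m M = 0.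
Proof.
apply: (qform_horner_mx_eq0 A_sym rs_uniq A_ann).
exact: quad_exceptional_ge0.
Qed.

Lemma deg_ge2 w : (2 <= deg e w)%N.
Proof.
have := qform_quad_ge0 (delta_mx 0 w).
by rewrite qform_delta horner_adjmx_quad_diag subr_ge0 (ler_nat R 2).
Qed.

Lemma deg2_quad_row_eq0 w : deg e w = 2 -> delta_mx 0 w *m M = 0 :> 'rV_n.+1.
Proof.
move=> degw; apply: qform_quad_eq0.
by rewrite qform_delta horner_adjmx_quad_diag degw subrr.
Qed.

Lemma deg2_codeg w x : deg e w = 2 -> x != w -> codeg e w x = e w x.
Proof.
move=> /deg2_quad_row_eq0 /(congr1 (fun v : 'rV_n.+1 => v 0 x)) wM xw.
move: wM; rewrite /= -rowE !mxE horner_adjmx_quadE eq_sym (negPf xw) /= mulr0n subr0.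
by move/eqP; rewrite subr_eq0 eqr_nat => /eqP.
Qed.

Lemma deg2_component_K3 w : deg e w = 2 -> is_K3 e (component e w).
Proof. by move=> degw; apply: codeg_row_component_K3 => // x; apply: deg2_codeg. Qed.

Lemma component_deg_ge3 c x :
  (3 <= deg e c)%N -> x \in component e c -> (3 <= deg e x)%N.
Proof.
move=> degc cx; rewrite leqNgt; apply/negP => degx.
have degx2 : deg e x = 2 by apply/eqP; rewrite eqn_leq deg_ge2 andbT -ltnS.
have xc : c \in component e x by rewrite mem_component_sym.
by rewrite (K3_component_deg e_sym e_irr (deg2_component_K3 degx2) xc) in degc.
Qed.

Lemma exists_deg_ge3 : eigenvalue A r -> exists x, (3 <= deg e x)%N.
Proof.
move=> /eigenvalueP [v vA v_neq0].
have [x degx | deg_lt3] := pickP (fun x => (3 <= deg e x)%N); first by exists x.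
have M0 : M = 0.
  apply/row_matrixP => w; rewrite row0 rowE; apply: deg2_quad_row_eq0.
  by apply/eqP; rewrite eqn_leq deg_ge2 andbT -ltnS ltnNge deg_lt3.
(* [lra] does not look at section hypotheses, hence the [have := r_gt2]. *)
have quad_r_gt0 : 0 < (('X - 2%:P) * ('X - (-1)%:P)).[r].
  by have := r_gt2; rewrite !hornerE => ?; apply: mulr_gt0; lra.
have : (('X - 2%:P) * ('X - (-1)%:P)).[r] *: v = 0.
  by rewrite -(horner_mx_eigen _ vA) M0 mulmx0.
by move/eqP; rewrite scaler_eq0 (gt_eqF quad_r_gt0) (negPf v_neq0).
Qed.

Lemma thick_vector_eq0 (z : 'rV[R]_n.+1) :
    (forall x y, e x y -> z 0 x = z 0 y) ->
    z *m eigenproj A rs r = 0 ->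
    (forall x, z 0 x != 0 -> (3 <= deg e x)%N) ->
  z = 0.
Proof.
move=> z_const zE0 z_thick.
have qform_ge0 : 0 <= qform z (horner_mx A (2%:P - 'X)).
  apply: (qform_horner_mx_ge0 A_sym rs_uniq A_ann).
  move=> y; have := s_ltN1; rewrite !inE => s_lt /or4P [] /eqP ->;
    [left | left | right | left]; rewrite ?hornerE //; lra.
have qformE : qform z (horner_mx A (2%:P - 'X)) =
              \sum_i (2 - (deg e i)%:R) * z 0 i ^+ 2.
  rewrite rmorphB /= horner_mx_C horner_mx_X /qform mxE; apply: eq_bigr => i _.
  have := mulmx_adjmx_edge_const i e_sym z_const; rewrite mxE => zAi.
  by rewrite mulmxBr mul_mx_scalar !mxE zAi -mulr_natr; ring.
have qform_le : qform z (horner_mx A (2%:P - 'X)) <= - sqnorm z.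
  rewrite qformE /sqnorm -sumrN; apply: ler_sum => i _.
  have [-> | zi_neq0] := eqVneq (z 0 i) 0; first by rewrite expr0n mulr0 oppr0.
  have : (3 : R) <= (deg e i)%:R by rewrite (ler_nat R 3) z_thick.
  by have := sqr_ge0 (z 0 i); nra.
apply/eqP; rewrite -sqnorm_eq0 eq_le sqnorm_ge0 andbT; lra.
Qed.

Lemma thick_components_dvd_char_poly k (c : 'I_k -> 'I_n.+1) :
    (forall i, 3 <= deg e (c i))%N ->
    (forall i j, c j \in component e (c i) -> i = j) ->
  ('X - r%:P) ^+ k %| char_poly A.
Proof.
move=> c_thick c_sep.
pose W := \matrix_(i, x) ((x \in component e (c i))%:R : R).
pose E := eigenproj A rs r.
apply: (@eigen_rows_dvd_char_poly _ _ _ _ (W *m E)); last first.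
  by rewrite -mulmxA (eigenproj_mulmx rs_uniq A_ann) scalemxAr.
rewrite -kermx_eq0; apply/rowV0P => v /sub_kermxP; rewrite mulmxA => vWE0.
have zE x : (v *m W) 0 x = \sum_i v 0 i * (x \in component e (c i))%:R.
  by rewrite mxE; apply: eq_bigr => i _; rewrite mxE.
have vW0 : v *m W = 0.
  apply: thick_vector_eq0 => // [x y xy | x].
    by rewrite !zE; apply: eq_bigr => i _; rewrite (mem_component_edge e_sym _ xy).
  rewrite zE; have [i cx _ | none] := pickP (fun i => x \in component e (c i)).
    exact: component_deg_ge3 (c_thick i) cx.
  by rewrite big1 ?eqxx // => i _; rewrite none mulr0.
apply/rowP => i; rewrite mxE.
have := congr1 (fun u : 'rV_n.+1 => u 0 (c i)) vW0.
rewrite /= zE mxE (bigD1 i) //= mem_component mulr1.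
suff -> : \sum_(j | j != i) v 0 j * (c i \in component e (c j))%:R = 0.
  by rewrite addr0.
apply: big1 => j ji.
case: (boolP (c i \in component e (c j))) => [/c_sep ij | _]; last by rewrite mulr0.
by rewrite ij eqxx in ji.
Qed.

Lemma deg_gap_of_nbr_sub u v :
    u != v -> ~~ e u v -> (forall w, e u w -> e v w) ->
  (deg e u + 5 <= deg e v)%N.
Proof.
move=> uv not_uv Nuv.
have Muv : M u v = (deg e u)%:R.
  rewrite horner_adjmx_quadE codeg_nbr_sub // (negPf not_uv) (negPf uv).
  by rewrite /= mulr0n !subr0.
have Mvu : M v u = (deg e u)%:R.
  rewrite horner_adjmx_quadE codegC // codeg_nbr_sub // e_sym (negPf not_uv).
  by rewrite eq_sym (negPf uv) /= mulr0n !subr0.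
pose x := delta_mx 0 v - delta_mx 0 u : 'rV[R]_n.+1.
have qx : qform x M = (deg e v)%:R - (deg e u)%:R - 4.
  by rewrite qform_delta_sub Muv Mvu !horner_adjmx_quad_diag; ring.
rewrite leqNgt; apply/negP => gap.
have gapR : ((deg e v)%:R : R) <= (deg e u)%:R + 4.
  by rewrite -natrD ler_nat -ltnS -addnS.
have /qform_quad_eq0 xM0 : qform x M = 0.
  by have := qform_quad_ge0 x; rewrite qx => ?; lra.
have := congr1 (fun y : 'rV_n.+1 => y 0 u) xM0.
rewrite /= mulmxBl -!rowE !mxE Mvu horner_adjmx_quad_diag; lra.
Qed.

Lemma thick_component_unique c1 c2 :
    ~~ (('X - r%:P) ^+ 2 %| char_poly A) ->
    (3 <= deg e c1)%N -> (3 <= deg e c2)%N ->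
  c2 \in component e c1.
Proof.
move=> r_simple deg_c1 deg_c2; apply: contraNT r_simple => c2_c1.
pose c (i : 'I_2) := if val i == 0 then c1 else c2.
apply: (@thick_components_dvd_char_poly 2 c) => [[[|[|//]] ?] | ] //.
move=> [[|[|//]] i2] [[|[|//]] j2]; rewrite /c /= => c_ji;
by [ apply: val_inj | rewrite c_ji in c2_c1
   | rewrite (mem_component_sym e_sym) c_ji in c2_c1 ].
Qed.

Lemma one_thick_component_rest_K3 :
    eigenvalue A r -> ~~ (('X - r%:P) ^+ 2 %| char_poly A) ->
  exists x0, (forall v, v \in component e x0 -> (3 <= deg e v)%N) /\
             (forall v, v \notin component e x0 -> is_K3 e (component e v)).
Proof.
move=> /exists_deg_ge3 [x0 deg_x0] r_simple; exists x0.
split=> [v | v v_x0]; first exact: component_deg_ge3.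
have [deg_v | deg_v_lt3] := leqP 3 (deg e v).
  by rewrite thick_component_unique in v_x0.
by apply/deg2_component_K3/eqP; rewrite eqn_leq -ltnS deg_v_lt3 deg_ge2.
Qed.

End TwoExceptionalEigenvalues.

Unset Implicit Arguments. Set Strict Implicit. Set Printing Implicit Defensive.

Theorem lemma2p5 (R : rcfType) (n : nat) (e : rel 'I_n)
  (e_sym : symmetric e) (e_irr : irreflexive e) (r s : R) :
  2 < r -> s < -1 ->
  (exists a b : nat,
     char_poly (adjmx R e) =
       ('X - 2%:P) ^+ a * ('X - (-1)%:P) ^+ b * ('X - r%:P) * ('X - s%:P)) ->
  (exists x0 : 'I_n,
     (forall v, v \in component e x0 -> (3 <= deg e v)%N) /\
     (forall v, v \notin component e x0 -> is_K3 e (component e v))) /\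
  (forall u v : 'I_n, u != v -> ~~ e u v ->
     (forall w, e u w -> e v w) -> (deg e u + 5 <= deg e v)%N).
Proof.
move=> r_gt2 s_ltN1 [a [b charA]].
have r_root : root (char_poly (adjmx R e)) r.
  by rewrite charA rootE !hornerE subrr !(mulr0, mul0r).
case: n e e_sym e_irr charA r_root => [|n] e e_sym e_irr charA r_root.
  by move: r_root; rewrite rootE /char_poly det_mx00 hornerC oner_eq0.
have A_ann : horner_mx (adjmx R e) (\prod_(z <- [:: 2; -1; r; s]) ('X - z%:P)) = 0.
  have := Cayley_Hamilton (adjmx R e).
  rewrite charA -!mulrA => /(horner_mx_sqrfree (adjmx_tr R e_sym)).
  rewrite mulrCA => /(horner_mx_sqrfree (adjmx_tr R e_sym)).
  by rewrite !big_cons big_nil mulr1 mulrCA.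
have r_simple : ~~ (('X - r%:P) ^+ 2 %| char_poly (adjmx R e)).
  have -> : char_poly (adjmx R e) =
      ('X - r%:P) * (('X - 2%:P) ^+ a * ('X - (-1)%:P) ^+ b * ('X - s%:P)).
    by rewrite charA; ring.
  apply: XsubC_sqr_ndvd; rewrite rootE !hornerE !mulf_neq0 ?expf_neq0 //;
    rewrite subr_eq0 gt_eqF //; lra.
rewrite -eigenvalue_root_char in r_root.
split.
  exact: (one_thick_component_rest_K3 e_sym e_irr r_gt2 s_ltN1 A_ann).
exact: (deg_gap_of_nbr_sub e_sym e_irr r_gt2 s_ltN1 A_ann).
Qed.
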